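(* Let $X$ be a set and let $T_1,T_2:\mathcal P(X)\to\mathcal P(X)$ be order reversing quasi involutions with $T_1(\mathcal P(X))=T_2(\mathcal P(X))=:\mathcal C_0$ and $T_1|_{\mathcal C_0}=T_2|_{\mathcal C_0}$. Then $T_1=T_2$.
   Context: $\mathcal P(X)$ denotes the power set of $X$. A map $T:\mathcal P(X)\to\mathcal P(X)$ is an order reversing quasi involution if for all $K,L\subseteq X$: (i) $K\subseteq TTK$, and (ii) $L\subseteq K$ implies $TK\subseteq TL$. *)

Definition subset {X : Type} (K L : X -> Prop) : Prop := forall x, K x -> L x.

Definition order_reversing_quasi_involution {X : Type}
  (T : (X -> Prop) -> (X -> Prop)) : Prop :=
  (forall K, subset K (T (T K))) /\
  (forall K L, subset L K -> subset (T K) (T L)).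

Definition image_of {X : Type} (T : (X -> Prop) -> (X -> Prop)) (C : X -> Prop) : Prop :=
  exists K, C = T K.

(* For K ⊆ X, T1 K ⊆ T1 (T1 (T1 K)) = T2 (T1 (T1 K)) ⊆ T2 K, the equality because
   T1 (T1 K) lies in the common image and the last step because T2 reverses the
   inclusion K ⊆ T1 (T1 K).  The hypotheses are symmetric in T1 and T2. *)
From Stdlib Require Import FunctionalExtensionality PropExtensionality.

Lemma subset_antisym {X : Type} (K L : X -> Prop) :
  subset K L -> subset L K -> K = L.
Proof.
  intros HKL HLK. apply functional_extensionality; intro x.
  apply propositional_extensionality; split; [apply HKL | apply HLK].
Qed.

Lemma subset_of_agree_on_image {X : Type} (T S : (X -> Prop) -> (X -> Prop)) :
  order_reversing_quasi_involution T ->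
  (forall K L, subset L K -> subset (S K) (S L)) ->
  (forall C, image_of T C -> T C = S C) ->
  forall K, subset (T K) (S K).
Proof.
  intros [T_TT T_rev] S_rev agree K.
  assert (image_TTK : image_of T (T (T K))) by (exists (T K); reflexivity).
  intros x Hx.
  apply (S_rev _ _ (T_TT K)).
  rewrite <- (agree _ image_TTK).
  apply T_TT, Hx.
Qed.

Theorem proposition8p1 (X : Type) (T1 T2 : (X -> Prop) -> (X -> Prop))
  (H1 : order_reversing_quasi_involution T1)
  (H2 : order_reversing_quasi_involution T2)
  (Himg : forall C, image_of T1 C <-> image_of T2 C)
  (Hres : forall C, image_of T1 C -> T1 C = T2 C) :
  T1 = T2.
Proof.
  assert (Hres2 : forall C, image_of T2 C -> T2 C = T1 C)
    by (intros C HC; symmetry; apply Hres, Himg, HC).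
  apply functional_extensionality; intro K.
  apply subset_antisym.
  - exact (subset_of_agree_on_image T1 T2 H1 (proj2 H2) Hres K).
  - exact (subset_of_agree_on_image T2 T1 H2 (proj2 H1) Hres2 K).
Qed.
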